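(* Let $X$ be a topological space, let $d\ge 1$, let $k=\operatorname{coind}_{\mathbb{Z}/2}(\mathrm{Conf}_2(X))$, and assume $k\ge d-1$. Then every injective function $f\colon X\to\mathbb{R}^d$ (not assumed continuous) satisfies $\alpha(f)\ge c_{d-1,k}$.
   Context: $\mathrm{Conf}_2(X)=\{(x,y)\in X\times X: x\neq y\}$ with the subspace topology and the $\mathbb{Z}/2$-action swapping coordinates. For a $\mathbb{Z}/2$-space $Z$, $\operatorname{coind}_{\mathbb{Z}/2}(Z)$ is the largest integer $k\ge0$ such that there is a continuous $\mathbb{Z}/2$-equivariant map $S^k\to Z$ ($S^k$ with the antipodal action). Spheres carry the geodesic metric $d(u,v)=\arccos\langle u,v\rangle$. For a topological space $X$ and a metric space $Y$, $\delta(g)=\inf\{\delta\ge 0 : \text{for every } x\in X \text{ there is an open neighborhood } U_x \text{ of } x \text{ with } \operatorname{diam}(g(U_x))\le\delta\}$. For injective $f\colon X\to\mathbb{R}^d$, $\Phi_f(x,y)=\frac{f(x)-f(y)}{\|f(x)-f(y)\|}\in S^{d-1}$ and $\alpha(f)=\delta(\Phi_f)$. For a metric space $Y$ and $r\ge0$, $\mathrm{VR}(Y;r)$ is the Vietoris–Rips complex (simplices: finite subsets of diameter $\le r$), geometrically realized. For $k\ge n\ge0$, $c_{n,k}=\inf\{r\ge0:\text{there is a continuous } \mathbb{Z}/2\text{-equivariant map } S^k\to\mathrm{VR}(S^n;r)\}$, with $\mathbb{Z}/2$ acting on $\mathrm{VR}(S^n;r)$ via the antipodal map on vertices. *)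

From HB Require Import structures.
From mathcomp Require Import all_boot all_order all_algebra.
From mathcomp Require Import all_classical all_reals all_analysis.
Set Implicit Arguments. Unset Strict Implicit. Unset Printing Implicit Defensive.
Import Order.TTheory GRing.Theory Num.Theory.
Import numFieldNormedType.Exports.
Local Open Scope classical_set_scope.
Local Open Scope ring_scope.

Section Defs.
Variable R : realType.

Definition dotp m (u v : 'rV[R]_m) : R := \sum_(i < m) u 0 i * v 0 i.
Definition enorm m (u : 'rV[R]_m) : R := Num.sqrt (dotp u u).

(* unit sphere S^(m-1) in R^m *)
Definition sphere m : set 'rV[R]_m := [set u | dotp u u = 1].
Arguments sphere : clear implicits.

Definition geod m (u v : 'rV[R]_m) : R := acos (dotp u v).

(* Conf_2(X) as a subset of X * X (carrying the subspace topology) *)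
Definition conf2 (X : topologicalType) : set (X * X) := [set p | p.1 <> p.2].
Arguments conf2 : clear implicits.

(* continuous Z/2-equivariant map S^k -> Conf_2(X) *)
Definition equiv_map_conf (X : topologicalType) (k : nat)
    (h : 'rV[R]_k.+1 -> X * X) : Prop :=
  {within sphere k.+1, continuous h} /\
  (forall u, sphere k.+1 u -> conf2 X (h u)) /\
  (forall u, sphere k.+1 u -> h (- u) = ((h u).2, (h u).1)).

Arguments equiv_map_conf : clear implicits.

(* coind_{Z/2}(Conf_2 X) = k : k is the largest such integer *)
Definition coind_conf_eq (X : topologicalType) (k : nat) : Prop :=
  (exists h, equiv_map_conf X k h) /\
  (forall m, (k < m)%N -> ~ exists h : 'rV[R]_m.+1 -> X * X, equiv_map_conf X m h).

(* delta(g) for g defined on the subspace D of a topological space T,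
   with values in a sphere with the geodesic metric:
   diam(g(U_x)) <= e, with U_x = V `&` D open neighbourhood of x in D *)
Definition delta_le (T : topologicalType) m (D : set T) (g : T -> 'rV[R]_m)
    (e : R) : Prop :=
  forall x, D x -> exists V : set T, open V /\ V x /\
    forall a b, D a -> D b -> V a -> V b -> geod (g a) (g b) <= e.

Definition delta_of (T : topologicalType) m (D : set T) (g : T -> 'rV[R]_m)
    : \bar R :=
  ereal_inf [set e%:E | e in [set e : R | 0 <= e /\ delta_le D g e]].

Definition Phi (X : topologicalType) d (f : X -> 'rV[R]_d) (p : X * X)
    : 'rV[R]_d :=
  (enorm (f p.1 - f p.2))^-1 *: (f p.1 - f p.2).

Definition alpha (X : topologicalType) d (f : X -> 'rV[R]_d) : \bar R :=
  delta_of (conf2 X) (Phi f).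

(* Vietoris--Rips complex VR(S^n; r): simplices are finite subsets
   (listed without repetition) of S^n of diameter <= r *)
Definition vr_simplex n (r : R) (s : seq 'rV[R]_n.+1) : Prop :=
  uniq s /\ (forall v, v \in s -> sphere n.+1 v) /\
  (forall v w, v \in s -> w \in s -> geod v w <= r).
Arguments vr_simplex : clear implicits.

(* points of the geometric realization: finitely supported convex
   combinations of vertices of a simplex *)
Definition vr_point n (r : R) (p : 'rV[R]_n.+1 -> R) : Prop :=
  exists s, vr_simplex n r s /\ (forall v, v \notin s -> p v = 0) /\
    (forall v, 0 <= p v) /\ \sum_(v <- s) p v = 1.
Arguments vr_point : clear implicits.

Definition std_simplex m (t : 'rV[R]_m) : Prop :=
  (forall i, 0 <= t 0 i) /\ \sum_(i < m) t 0 i = 1.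

Definition bary n (s : seq 'rV[R]_n.+1) (t : 'rV[R]_(size s))
    : 'rV[R]_n.+1 -> R :=
  fun v => \sum_(i < size s | nth 0 s i == v) t 0 i.
Arguments bary : clear implicits.

(* open sets of the geometric realization |VR(S^n; r)| (weak topology):
   W is open iff its preimage under every characteristic map of a closed
   simplex is (relatively) open in the standard simplex *)
Definition vr_open n (r : R) (W : set ('rV[R]_n.+1 -> R)) : Prop :=
  (W `<=` vr_point n r)%classic /\
  forall s, vr_simplex n r s -> forall t : 'rV[R]_(size s),
    std_simplex t -> W (bary n s t) ->
    \forall t' \near t, std_simplex t' -> W (bary n s t').
Arguments vr_open : clear implicits.

(* continuous Z/2-equivariant map S^k -> |VR(S^n; r)|, the Z/2 action on
   |VR| being induced by the antipodal map on vertices *)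
Definition vr_equiv_map n k (r : R) (g : 'rV[R]_k.+1 -> ('rV[R]_n.+1 -> R))
    : Prop :=
  (forall u, sphere k.+1 u -> vr_point n r (g u)) /\
  (forall W, vr_open n r W -> forall u, sphere k.+1 u -> W (g u) ->
     \forall u' \near u, sphere k.+1 u' -> W (g u')) /\
  (forall u, sphere k.+1 u -> g (- u) = (fun v => g u (- v))).

Arguments vr_equiv_map : clear implicits.

Definition c_nk n k : \bar R :=
  ereal_inf [set r%:E | r in [set r : R | 0 <= r /\ exists g, vr_equiv_map n k r g]].

Arguments c_nk : clear implicits.
Arguments coind_conf_eq : clear implicits.
End Defs.

(* Composing an equivariant map h : S^k -> Conf_2(X) with Phi_f gives an odd
   map G : S^k -> S^(d-1).  If every point of Conf_2(X) has a neighbourhood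
   whose image under Phi_f has diameter <= e, compactness of S^k yields a
   Lebesgue number rho: G sends any two points that are rho-close to a common
   point of S^k to points at geodesic distance <= e.  A partition of unity
   subordinate to the rho-balls around a finite, antipodally symmetric rho-net
   {w} of S^k then defines u |-> sum_w phi_w(u) [G w], a continuous equivariant
   map S^k -> |VR(S^(d-1); e)|.  Hence c_(d-1,k) <= e for every such e. *)

From mathcomp Require Import all_boot all_order all_algebra.
From mathcomp Require Import all_classical all_reals all_analysis.
From mathcomp Require Import ring lra.
Import Order.TTheory GRing.Theory Num.Theory.
Import numFieldNormedType.Exports.
Local Open Scope classical_set_scope.
Local Open Scope ring_scope.

Lemma near_all_seq {T : Type} {I : eqType} (F : set_system T) {FF : Filter F}
    (s : seq I) (P : I -> T -> Prop) :
  (forall i, i \in s -> \forall x \near F, P i x) ->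
  \forall x \near F, forall i, i \in s -> P i x.
Proof.
elim: s => [|a s IHs] near_P; first exact: nearW.
have near_a := near_P a (mem_head _ _).
have near_s := IHs (fun i si => near_P i (mem_behead (s := a :: s) si)).
apply: filterS2 near_a near_s => x Pa Ps i.
by rewrite in_cons => /orP[/eqP->|/Ps].
Qed.

Section compact_normed.
Context {R : realType} {V : normedModType R} {A : set V}.
Hypothesis A_compact : compact A.

Lemma compact_finite_net (r : R) : 0 < r ->
  exists N : seq V, (forall w, w \in N -> A w) /\
    forall u, A u -> exists2 w, w \in N & `|w - u| < r.
Proof.
move=> r_gt0; have ball_open_r x : A x -> open (ball x r).
  by move=> _; exact: ball_open.
have ball_cover_r : A `<=` cover A (fun x => ball x r).
  by move=> u Au; exists u => //; exact: ballxx.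
have := A_compact; rewrite compact_cover.
move=> /(_ _ A _ ball_open_r ball_cover_r)[D DA cover_D].
exists (finmap.enum_fset D); split=> [w /DA/set_mem//|u /cover_D[w wD]].
by rewrite -ball_normE; exists w.
Qed.

Lemma compact_lebesgue_number (P : V -> V -> Prop) :
  (forall x, A x -> exists2 r, 0 < r & forall a b, A a -> A b ->
     `|x - a| < r -> `|x - b| < r -> P a b) ->
  exists2 rho, 0 < rho & forall u a b, A u -> A a -> A b ->
    `|u - a| <= rho -> `|u - b| <= rho -> P a b.
Proof.
move=> P_local.
have /compact_near_coveringP/(_ R (0 : R)^'+) cover_A := A_compact.
have /cover_A : forall x, A x -> \forall x' \near x & rho \near 0^'+,
    forall a b, A a -> A b -> `|x' - a| <= rho -> `|x' - b| <= rho -> P a b.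
  move=> x /P_local[r r_gt0 Pr].
  exists (ball x (r / 2), [set rho | rho < r / 2]).
    by split=> /=; [apply: nbhsx_ballx | apply: nbhs_right_lt]; exact: divr_gt0.
  case=> x' rho /= [xx' rho_lt] a b Aa Ab x'a x'b.
  move: xx'; rewrite -ball_normE /= => xx'.
  by apply: Pr => //; rewrite (le_lt_trans (ler_distD x' _ _)) //; lra.
move=> near_rho.
have [rho [rho_gt0 Prho]] := filter_ex (filterI (nbhs_right_gt 0) near_rho).
by exists rho => // u a b /Prho; apply.
Qed.

End compact_normed.

Lemma cvg_row (R : realType) {T : Type} (F : set_system T) {FF : Filter F} m
    (f : T -> 'I_m -> R) (f0 : 'I_m -> R) :
  (forall i, f x i @[x --> F] --> f0 i) ->
  \row_i f x i @[x --> F] --> \row_i f0 i.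
Proof.
move=> f_cvg P /nbhs_normP[eps eps_gt0 epsP].
have : \forall x \near F, forall i, ball (f0 i) eps (f x i).
  by apply: filter_forall => i; apply: f_cvg; exact: nbhsx_ballx.
apply: filterS => x f_close; apply: epsP; rewrite -mx_norm_ball.
by split=> // i j; rewrite !mxE; exact: f_close.
Qed.

Section sphere.
Variables (R : realType) (m : nat).
Implicit Types u v : 'rV[R]_m.

Lemma dotp_ge0 u : 0 <= dotp u u.
Proof. by apply: sumr_ge0 => i _; rewrite -expr2 sqr_ge0. Qed.

Lemma dotp_eq0 u : dotp u u = 0 -> u = 0.
Proof.
move=> /psumr_eq0P u0; apply/rowP => i; rewrite mxE.
have /eqP := u0 (fun j _ => ltac:(by rewrite -expr2 sqr_ge0)) i isT.
by rewrite mulf_eq0 orbb => /eqP.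
Qed.

Lemma dotpNN u v : dotp (- u) (- v) = dotp u v.
Proof. by apply: eq_bigr => i _; rewrite !mxE mulrNN. Qed.

Lemma dotpZZ (c : R) u : dotp (c *: u) (c *: u) = c ^+ 2 * dotp u u.
Proof.
by rewrite /dotp mulr_sumr; apply: eq_bigr => i _; rewrite !mxE; ring.
Qed.

Lemma sphereN u : sphere u -> sphere (- u).
Proof. by rewrite /sphere /= dotpNN. Qed.

Lemma sphere_closed : closed (@sphere R m).
Proof.
have dotp_cont : continuous (fun u : 'rV[R]_m => dotp u u).
  move=> u; apply: (cvg_big (F := nbhs u) add_continuous) => i _.
  by apply: cvgM; apply: coord_continuous.
have -> : @sphere R m = (fun u => dotp u u) @^-1` [set 1] by [].
by apply: closed_comp => [u _|]; [exact: dotp_cont | exact: closed_eq].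
Qed.

Lemma sphere_coord_le1 u i : sphere u -> `|u 0 i| <= 1.
Proof.
rewrite /sphere /= /dotp (bigD1 i) //= => sum_eq1.
have : 0 <= \sum_(j < m | j != i) u 0 j * u 0 j.
  by apply: sumr_ge0 => j _; rewrite -expr2 sqr_ge0.
by rewrite ler_norml; nra.
Qed.

Lemma sphere_compact : compact (@sphere R m).
Proof.
apply: bounded_closed_compact; last exact: sphere_closed.
exists 1; split; first by rewrite num_real.
move=> M M_gt1 u Su /=.
have : ball (0 : 'rV[R]_m) M u.
  split=> [|i j]; first lra.
  rewrite /ball /= mxE sub0r normrN (ord1 i).
  exact: le_lt_trans (sphere_coord_le1 _ j Su) M_gt1.
by rewrite -ball_normE /= sub0r normrN => /ltW.
Qed.

End sphere.

Section barycentric.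
Variables (R : realType) (n : nat).
Implicit Types (s : seq 'rV[R]_n.+1) (p : 'rV[R]_n.+1 -> R).

Lemma bary_row s p : uniq s -> (forall v, v \notin s -> p v = 0) ->
  @bary _ _ s (\row_(i < size s) p (nth 0 s i)) = p.
Proof.
move=> s_uniq p_out; apply: funext => v; rewrite /bary.
under eq_bigr do rewrite mxE.
transitivity (\sum_(x <- s | x == v) p x).
  by rewrite (big_nth 0) big_mkord.
have [vs|vNs] := boolP (v \in s); last first.
  rewrite p_out // big_seq_cond big_pred0 // => x.
  by apply: contraNF vNs => /andP[+ /eqP<-].
rewrite big_mkcond (bigD1_seq v) //= eqxx big1 ?addr0 // => x /negbTE xNv.
by rewrite xNv.
Qed.

Lemma std_simplex_row s p : (forall v, 0 <= p v) -> \sum_(v <- s) p v = 1 ->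
  std_simplex (\row_(i < size s) p (nth 0 s i)).
Proof.
move=> p_ge0 p_sum1; split=> [i|]; first by rewrite mxE.
under eq_bigr do rewrite mxE.
by rewrite -p_sum1 (big_nth 0) big_mkord.
Qed.

End barycentric.

Section net_partition_of_unity.
Variables (R : realType) (n k : nat) (e rho : R).
Variables (G : 'rV[R]_k.+1 -> 'rV[R]_n.+1) (N : seq 'rV[R]_k.+1).
Hypothesis G_sphere : forall u, sphere u -> sphere (G u).
Hypothesis G_odd : forall u, sphere u -> G (- u) = - G u.
Hypothesis G_small : forall u a b, sphere u -> sphere a -> sphere b ->
  `|u - a| <= rho -> `|u - b| <= rho -> geod (G a) (G b) <= e.
Hypothesis N_sphere : forall w, w \in N -> sphere w.
Hypothesis N_net : forall u, sphere u -> exists2 w, w \in N & `|w - u| < rho.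

(* Closing the net under negation is what makes [weight] equivariant. *)
Let net := N ++ map -%R N.
Let bump (w u : 'rV[R]_k.+1) := Num.max 0 (rho - `|u - w|).
Let mass (u : 'rV[R]_k.+1) := \sum_(w <- net) bump w u.
Let weight (u : 'rV[R]_k.+1) (v : 'rV[R]_n.+1) :=
  (\sum_(w <- net | G w == v) bump w u) / mass u.
Let carried_by (u : 'rV[R]_k.+1) (s : seq 'rV[R]_n.+1) :=
  forall w, w \in net -> `|u - w| < rho -> G w \in s.
Let near_vertices (u : 'rV[R]_k.+1) :=
  undup [seq G w | w <- net & `|u - w| <= rho].

Lemma net_sphere w : w \in net -> sphere w.
Proof.
rewrite mem_cat => /orP[/N_sphere//|/mapP[x /N_sphere Sx ->]].
exact: sphereN.
Qed.

Lemma perm_net_opp : perm_eq (map -%R net) net.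
Proof. by rewrite /net map_cat (mapK opprK) perm_catC. Qed.

Lemma bump_ge0 w u : 0 <= bump w u.
Proof. by rewrite /bump le_max lexx. Qed.

Lemma bump_eq0 w u : rho <= `|u - w| -> bump w u = 0.
Proof. by move=> far; rewrite /bump max_l // subr_le0. Qed.

Lemma bumpN w u : bump w (- u) = bump (- w) u.
Proof. by rewrite /bump -opprD normrN opprK. Qed.

Lemma bump_continuous w : continuous (bump w).
Proof.
rewrite /bump.
apply: (@max_fun_continuous _ 'rV[R]_k.+1 R (cst 0) (fun u => rho - `|u - w|)).
  exact: cst_continuous.
move=> u; apply: (@cvgB _ _ _ (nbhs u)); first exact: cvg_cst.
apply: (@cvg_norm _ _ _ (nbhs u)).
by apply: (@cvgB _ _ _ (nbhs u)); [exact: cvg_id | exact: cvg_cst].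
Qed.

Lemma mass_gt0 u : sphere u -> 0 < mass u.
Proof.
move=> /N_net[w wN uw]; have w_net : w \in net by rewrite mem_cat wN.
have bump_gt0 : 0 < bump w u by rewrite /bump lt_max distrC subr_gt0 uw orbT.
have rest_ge0 : 0 <= \sum_(x <- rem w net) bump x u.
  by apply: sumr_ge0 => x _; exact: bump_ge0.
by rewrite /mass (big_rem w w_net) /=; lra.
Qed.

Lemma massN u : mass (- u) = mass u.
Proof.
rewrite /mass; under eq_bigr do rewrite bumpN.
by rewrite -(big_map -%R predT (bump^~ u)) (perm_big _ perm_net_opp).
Qed.

Lemma mass_continuous : continuous mass.
Proof.
move=> u; apply: (cvg_big (F := nbhs u) add_continuous) => w _.
exact: bump_continuous.
Qed.

Lemma weight_ge0 u v : 0 <= weight u v.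
Proof.
by apply: divr_ge0; apply: sumr_ge0 => w _; exact: bump_ge0.
Qed.

Lemma weightN u : weight (- u) = (fun v => weight u (- v)).
Proof.
apply: funext => v; rewrite /weight massN; congr (_ / _).
under eq_bigr do rewrite bumpN.
rewrite -[in RHS](perm_big _ perm_net_opp) big_map.
rewrite big_seq_cond [RHS]big_seq_cond; apply: eq_bigl => w.
case w_net: (w \in net) => //=.
by rewrite G_odd ?eqr_opp //; exact: net_sphere.
Qed.

Lemma weight_continuous u v : sphere u -> weight x v @[x --> u] --> weight u v.
Proof.
move=> Su; apply: (@cvgM _ _ (nbhs u)).
  apply: (cvg_big (F := nbhs u) add_continuous) => w _.
  exact: bump_continuous.
apply: (@cvgV _ _ (nbhs u)); last exact: mass_continuous.
by rewrite gt_eqF ?mass_gt0.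
Qed.

Lemma weight_eq0 u s v : carried_by u s -> v \notin s -> weight u v = 0.
Proof.
move=> carried vNs; rewrite /weight big_seq_cond big1 ?mul0r //.
move=> w /andP[w_net /eqP Gw]; have [far|close] := leP rho `|u - w|.
  exact: bump_eq0.
by move: vNs; rewrite -Gw carried.
Qed.

Lemma sum_weight u s : sphere u -> uniq s -> carried_by u s ->
  \sum_(v <- s) weight u v = 1.
Proof.
move=> Su s_uniq carried; rewrite /weight -mulr_suml.
under eq_bigr do rewrite big_mkcond /=.
rewrite exchange_big /=.
suff -> : \sum_(w <- net) \sum_(v <- s) (if G w == v then bump w u else 0)
    = mass u.
  by rewrite divff // gt_eqF ?mass_gt0.
rewrite /mass big_seq [RHS]big_seq; apply: eq_bigr => w w_net.
have [far|close] := leP rho `|u - w|.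
  by rewrite bump_eq0 //; apply: big1 => v _; case: ifP.
rewrite (bigD1_seq (G w)) ?carried //= eqxx big1 ?addr0 // => v /negbTE.
by rewrite eq_sym => ->.
Qed.

Lemma mem_near_vertices u w :
  w \in net -> `|u - w| <= rho -> G w \in near_vertices u.
Proof.
move=> w_net uw; rewrite mem_undup; apply/mapP.
by exists w; rewrite ?mem_filter ?uw.
Qed.

Lemma carried_by_near_vertices u : carried_by u (near_vertices u).
Proof. by move=> w w_net /ltW; exact: mem_near_vertices. Qed.

Lemma near_carried_by u : \forall u' \near u, carried_by u' (near_vertices u).
Proof.
apply: (@near_all_seq _ _ (nbhs u)) => w w_net.
have [close|far] := leP `|u - w| rho.
  by apply: nearW => u' _; exact: mem_near_vertices.
apply/nbhs_ballP; exists (`|u - w| - rho); first by rewrite /= subr_gt0.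
move=> u'; rewrite -ball_normE /= => uu' u'w.
have := ler_distD u' u w; lra.
Qed.

Lemma near_vertices_simplex u : sphere u -> vr_simplex e (near_vertices u).
Proof.
move=> Su; split; first exact: undup_uniq.
have near_vertexP v : v \in near_vertices u ->
    exists2 w, w \in net & `|u - w| <= rho /\ v = G w.
  rewrite mem_undup => /mapP[w]; rewrite mem_filter => /andP[uw w_net] ->.
  by exists w.
split=> [v /near_vertexP[w w_net [_ ->]]|v v']; first exact/G_sphere/net_sphere.
move=> /near_vertexP[w w_net [uw ->]] /near_vertexP[w' w'_net [uw' ->]].
exact: G_small Su (net_sphere _ w_net) (net_sphere _ w'_net) uw uw'.
Qed.

Lemma weight_vr_point u : sphere u -> vr_point e (weight u).
Proof.
move=> Su; exists (near_vertices u); split; first exact: near_vertices_simplex.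
split=> [v|]; first exact/weight_eq0/carried_by_near_vertices.
split; first exact: weight_ge0.
by apply: sum_weight; [|exact: undup_uniq|exact: carried_by_near_vertices].
Qed.

Lemma weight_vr_continuous u (U : set ('rV[R]_n.+1 -> R)) : vr_open e U ->
  sphere u -> U (weight u) -> \forall u' \near u, sphere u' -> U (weight u').
Proof.
move=> [_ U_open] Su Uu; set s := near_vertices u.
have s_uniq : uniq s by exact: undup_uniq.
pose t x := \row_(i < size s) weight x (nth 0 s i).
have bary_t x : carried_by x s -> @bary _ _ s (t x) = weight x.
  by move=> carried; apply: bary_row => // v; exact: weight_eq0.
have std_t x : sphere x -> carried_by x s -> std_simplex (t x).
  move=> Sx carried; apply: std_simplex_row => [v|]; first exact: weight_ge0.
  exact: sum_weight.
have t_cvg : t x @[x --> u] --> t u.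
  by apply: (@cvg_row _ _ (nbhs u)) => i; exact: weight_continuous.
have near_t : \forall t' \near t u, std_simplex t' -> U (@bary _ _ s t').
  have carried_u := carried_by_near_vertices u.
  apply: (U_open s (near_vertices_simplex _ Su) (t u)); first exact: std_t.
  by rewrite bary_t.
move: near_t => /t_cvg near_t.
near=> u' => Su'.
have carried' : carried_by u' s by near: u'; exact: near_carried_by.
have : std_simplex (t u') -> U (@bary _ _ s (t u')) by near: u'.
by rewrite bary_t //; apply; exact: std_t.
Unshelve. all: by end_near.
Qed.

Lemma net_vr_equiv_map : exists g, @vr_equiv_map R n k e g.
Proof.
exists weight; split; first exact: weight_vr_point.
split=> [U U_open u|u _]; first exact: weight_vr_continuous.
exact: weightN.
Qed.

End net_partition_of_unity.

Lemma odd_map_vr_equiv_map (R : realType) n k (e : R)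
    (G : 'rV[R]_k.+1 -> 'rV[R]_n.+1) :
  (forall u, sphere u -> sphere (G u)) ->
  (forall u, sphere u -> G (- u) = - G u) ->
  (forall x, sphere x -> exists2 r, 0 < r & forall a b, sphere a -> sphere b ->
     `|x - a| < r -> `|x - b| < r -> geod (G a) (G b) <= e) ->
  exists g, @vr_equiv_map R n k e g.
Proof.
have S_compact := sphere_compact R k.+1.
move=> G_sphere G_odd /(compact_lebesgue_number S_compact)[rho rho_gt0 G_small].
have [N [N_sphere N_net]] := compact_finite_net S_compact _ rho_gt0.
exact: net_vr_equiv_map G_sphere G_odd G_small N_sphere N_net.
Qed.

Lemma delta_le_comp (R : realType) (T : topologicalType) (V : normedModType R)
    m (D : set T) (g : T -> 'rV[R]_m) (e : R) (A : set V) (h : V -> T) :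
  {within A, continuous h} -> (forall u, A u -> D (h u)) -> delta_le D g e ->
  forall x, A x -> exists2 r, 0 < r & forall a b, A a -> A b ->
    `|x - a| < r -> `|x - b| < r -> geod (g (h a)) (g (h b)) <= e.
Proof.
move=> h_cont hD g_small x Ax.
have [U [U_open [Uhx U_small]]] := g_small (h x) (hD x Ax).
have : within A (nbhs x) (h @^-1` U).
  by rewrite nbhs_subspace_in //; apply: h_cont; apply: open_nbhs_nbhs.
move=> /nbhs_ballP[r r_gt0 near_U].
exists r => // a b Aa Ab xa xb.
apply: U_small; [exact: hD | exact: hD | apply: near_U Aa | apply: near_U Ab].
  by rewrite -ball_normE.
by rewrite -ball_normE.
Qed.

Section Phi.
Variables (R : realType) (X : topologicalType) (d : nat) (f : X -> 'rV[R]_d).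

Lemma Phi_sphere p : injective f -> p.1 <> p.2 -> sphere (Phi f p).
Proof.
move=> f_inj p12; rewrite /sphere /= /Phi dotpZZ /enorm.
set x := f p.1 - f p.2.
have x_gt0 : 0 < dotp x x.
  rewrite lt_neqAle dotp_ge0 andbT eq_sym; apply/eqP => /dotp_eq0/eqP.
  by rewrite subr_eq0 => /eqP/f_inj.
by rewrite exprVn sqr_sqrtr ?mulVf ?gt_eqF // ltW.
Qed.

Lemma Phi_swap p : Phi f (p.2, p.1) = - Phi f p.
Proof. by rewrite /Phi /= -opprB /enorm dotpNN scalerN. Qed.

End Phi.

Theorem theorem3p5 (R : realType) (X : topologicalType) (d k : nat) :
  (1 <= d)%N -> coind_conf_eq R X k -> (d.-1 <= k)%N ->
  forall f : X -> 'rV[R]_d, injective f ->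
  (c_nk R d.-1 k <= alpha f)%E.
Proof.
(* Neither the maximality of k nor the bound d.-1 <= k is needed. *)
move=> d_gt0 [[h [h_cont [h_conf h_swap]]] _] _ f f_inj.
case: d d_gt0 f f_inj => // d _ f f_inj.
apply: le_ereal_inf_tmp => _ [e [e_ge0 f_small] <-].
apply: ereal_inf_lbound; exists e => //; split => //.
apply: (@odd_map_vr_equiv_map _ _ _ _ (Phi f \o h)).
- by move=> u Su; apply: Phi_sphere => //; exact: h_conf.
- by move=> u Su; rewrite /= h_swap // Phi_swap.
- exact: delta_le_comp h_cont h_conf f_small.
Qed.
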